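(* Let $A$ be a basic connected finite dimensional algebra over an algebraically closed field $k$ with ordinary quiver $Q$ without oriented cycles, and let $\nu\colon kQ\twoheadrightarrow A$ be a presentation with kernel $I$. Regard $\mathsf{Hom}(\pi_1(Q,I),k^+)$ as an abelian Lie algebra (zero bracket). Then $\theta_\nu\colon\mathsf{Hom}(\pi_1(Q,I),k^+)\to\mathsf{HH}^1(A)$ is a Lie algebra homomorphism; in particular $\mathsf{Im}(\theta_\nu)$ is an abelian Lie subalgebra of $\mathsf{HH}^1(A)$.
   Context: Fix a complete set $e_1,\dots,e_n$ of primitive orthogonal idempotents of $A$ (indexed by $Q_0=\{1,\dots,n\}$), $E=\bigoplus ke_i$. A presentation is a surjective algebra homomorphism $\nu\colon kQ\twoheadrightarrow A$ with admissible kernel (i.e. $(kQ^+)^N\subseteq\mathsf{Ker}\,\nu\subseteq(kQ^+)^2$ for some $N\ge2$, $kQ^+$ the arrow ideal) and $\nu(e_i)=e_i$. Walks are paths in $Q$ with formal inverses of arrows allowed. The homotopy relation $\sim_I$ is the smallest equivalence relation on walks with $\alpha\alpha^{-1}\sim_I e_y$, $\alpha^{-1}\alpha\sim_I e_x$ for arrows $\alpha\colon x\to y$, compatible with concatenation ($v\sim_I v'\Rightarrow wvu\sim_I wv'u$), and with $u\sim_I v$ for paths $u,v$ occurring with nonzero coefficient in a same minimal relation of $I$ (a nonzero $\sum t_iu_i\in I$, $t_i\ne0$, distinct paths, no nonempty proper subsum in $I$). With a fixed base vertex $x_0$, $\pi_1(Q,I)$ is the group of classes of closed walks at $x_0$.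 $\mathsf{HH}^1(A)$ is identified with $Der_0(A)/Int_0(A)$, where $Der_0(A)$ consists of derivations vanishing on all $e_i$ (Lie bracket: commutator) and $Int_0(A)=\{a\mapsto ea-ae\mid e\in E\}$. Fix a maximal tree $T$ of $Q$ and let $\gamma_x$ be the minimal walk in $T$ from $x_0$ to $x$. For $f\colon\pi_1(Q,I)\to k^+$ a group homomorphism, $\theta_\nu(f)$ is the class of the derivation $\tilde f$ with $\tilde f(\nu(u))=f([\gamma_y^{-1}u\gamma_x]_I)\nu(u)$ for all paths $u$ from $x$ to $y$. *)

From HB Require Import structures.
From mathcomp Require Import all_boot all_order all_algebra all_field.
From Stdlib Require Import Relation_Operators.
Set Implicit Arguments. Unset Strict Implicit. Unset Printing Implicit Defensive.
Import GRing.Theory.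
Local Open Scope ring_scope.

(* A walk is a start vertex together with the list of its steps, in     *)
(* order of traversal; a step (a, true) is the arrow a, (a, false) is   *)
(* its formal inverse a^{-1}.  A path is a start vertex with a list of  *)
(* arrows in order of traversal.                                        *)
Section Quiver.
Variables (n : nat) (Q1 : finType) (src tgt : Q1 -> 'I_n).

Definition step := (Q1 * bool)%type.
Definition st_src (s : step) : 'I_n := if s.2 then src s.1 else tgt s.1.
Definition st_tgt (s : step) : 'I_n := if s.2 then tgt s.1 else src s.1.
Definition step_inv (s : step) : step := (s.1, ~~ s.2).

Definition walk := ('I_n * seq step)%type.
Definition wend (w : walk) : 'I_n := last w.1 (map st_tgt w.2).

Fixpoint steps_valid (x : 'I_n) (l : seq step) : bool :=
  match l with
  | [::] => true
  | s :: l' => (st_src s == x) && steps_valid (st_tgt s) l'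
  end.
Definition wvalid (w : walk) : bool := steps_valid w.1 w.2.

(* wcat v w : first traverse v, then w  (written  w v  in the paper) *)
Definition wcat (v w : walk) : walk := (v.1, v.2 ++ w.2).
Definition winv (w : walk) : walk := (wend w, rev (map step_inv w.2)).

Definition qpath := ('I_n * seq Q1)%type.
Definition path_walk (u : qpath) : walk := (u.1, map (fun a => (a, true)) u.2).
Definition pvalid (u : qpath) : bool := wvalid (path_walk u).
Definition pend (u : qpath) : 'I_n := wend (path_walk u).

Definition no_oriented_cycles : Prop :=
  forall u : qpath, pvalid u -> u.2 != [::] -> pend u != u.1.

Definition in_arrows (T : {set Q1}) (w : walk) : bool :=
  all (fun s : step => s.1 \in T) w.2.
Fixpoint reduced_steps (l : seq step) : bool :=
  match l with
  | s1 :: ((s2 :: _) as l') => (s2 != step_inv s1) && reduced_steps l'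
  | _ => true
  end.

Definition maximal_tree (T : {set Q1}) : Prop :=
  (forall x y : 'I_n, exists w : walk,
      [/\ wvalid w, in_arrows T w, w.1 = x & wend w = y]) /\
  (forall w : walk, wvalid w -> in_arrows T w -> reduced_steps w.2 ->
      wend w = w.1 -> w.2 = [::]).

Definition minimal_tree_walk (T : {set Q1}) (x0 x : 'I_n) (g : walk) : Prop :=
  [/\ wvalid g, in_arrows T g, g.1 = x0, wend g = x &
      forall w : walk, wvalid w -> in_arrows T w -> w.1 = x0 -> wend w = x ->
        (size g.2 <= size w.2)%N].

Definition closed_at (x0 : 'I_n) (w : walk) : bool :=
  [&& wvalid w, w.1 == x0 & wend w == x0].

End Quiver.

(* The algebra side.  A presentation nu : kQ ->> A with nu(e_i) = e_i   *)
(* is given (universal property of the path algebra) by the images     *)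
(* nu a in e_{tgt a} A e_{src a} of the arrows; the image of a path    *)
(* a_1 ... a_m (traversal order) starting at x is                      *)
(* nu a_m * ... * nu a_1 * e_x.  An element of kQ is represented by a  *)
(* finite list of (valid, pairwise distinct) paths with coefficients.  *)
Section Algebra.
Variables (n : nat) (Q1 : finType) (src tgt : Q1 -> 'I_n).
Variables (k : fieldType) (A : falgType k) (e : 'I_n -> A) (nu : Q1 -> A).

Definition nupath (u : qpath n Q1) : A :=
  foldl (fun acc a => nu a * acc) (e u.1) u.2.

Definition combo := seq (qpath n Q1 * k).
Definition combo_ok (l : combo) : bool :=
  uniq (map fst l) && all (fun c => pvalid src tgt c.1) l.
Definition combo_val (l : combo) : A := \sum_(c <- l) c.2 *: nupath c.1.

Definition complete_primitive_orthogonal : Prop :=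
  [/\ \sum_i e i = 1,
      forall i, e i * e i = e i,
      forall i j, i != j -> e i * e j = 0 &
      forall i, e i != 0 /\
        forall f : A, f * f = f -> f = e i * f * e i -> f = 0 \/ f = e i].

(* A is basic : e_i A and e_j A are non-isomorphic for i <> j *)
Definition basic_wrt : Prop :=
  forall i j, i != j ->
    ~ exists a b : A, [/\ a = e j * a * e i, b = e i * b * e j,
                          a * b = e j & b * a = e i].

Definition connected_algebra : Prop :=
  forall c : A, c * c = c -> (forall a, c * a = a * c) -> c = 0 \/ c = 1.

Definition admissible_presentation : Prop :=
  [/\ forall a, nu a = e (tgt a) * nu a * e (src a),
      forall a : A, exists l : combo, combo_ok l /\ a = combo_val l &
      exists N : nat, (2 <= N)%N /\
        (* (kQ^+)^N is contained in Ker nu *)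
        (forall u, pvalid src tgt u -> (N <= size u.2)%N -> nupath u = 0) /\
        (* Ker nu is contained in (kQ^+)^2 *)
        (forall l : combo, combo_ok l -> combo_val l = 0 ->
           forall c, c \in l -> (size c.1.2 < 2)%N -> c.2 = 0)].

Definition minimal_relation (l : combo) : Prop :=
  [/\ combo_ok l, l != [::], all (fun c => c.2 != 0) l, combo_val l = 0 &
      forall m : bitseq, size m = size l ->
        mask m l != [::] -> (size (mask m l) < size l)%N ->
        combo_val (mask m l) != 0].

Inductive hgen : walk n Q1 -> walk n Q1 -> Prop :=
| hg_inv_r (a : Q1) : hgen (tgt a, [:: (a, false); (a, true)]) (tgt a, [::])
| hg_inv_l (a : Q1) : hgen (src a, [:: (a, true); (a, false)]) (src a, [::])
| hg_rel (l : combo) (u v : qpath n Q1) :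
    minimal_relation l -> u \in map fst l -> v \in map fst l ->
    hgen (path_walk u) (path_walk v).

Inductive hstep : walk n Q1 -> walk n Q1 -> Prop :=
| hs_ctx (x : 'I_n) (p q : seq (step Q1)) (v v' : walk n Q1) :
    hgen v v' -> v.1 = wend src tgt (x, p) -> v'.1 = wend src tgt (x, p) ->
    wvalid src tgt (x, p ++ v.2 ++ q) -> wvalid src tgt (x, p ++ v'.2 ++ q) ->
    hstep (x, p ++ v.2 ++ q) (x, p ++ v'.2 ++ q).

Definition homotopic : walk n Q1 -> walk n Q1 -> Prop :=
  clos_refl_sym_trans (walk n Q1) hstep.

(* a group homomorphism pi_1(Q, I) -> k^+, given on representatives *)
Definition pi1_hom (x0 : 'I_n) (F : walk n Q1 -> k) : Prop :=
  (forall w1 w2, closed_at src tgt x0 w1 -> closed_at src tgt x0 w2 ->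
     homotopic w1 w2 -> F w1 = F w2) /\
  (forall w1 w2, closed_at src tgt x0 w1 -> closed_at src tgt x0 w2 ->
     F (wcat w1 w2) = F w1 + F w2).

Definition der0 (D : A -> A) : Prop :=
  [/\ forall (c : k) (a b : A), D (c *: a + b) = c *: D a + D b,
      forall a b : A, D (a * b) = D a * b + a * D b &
      forall i, D (e i) = 0].

Definition int0 (D : A -> A) : Prop :=
  exists c : 'I_n -> k,
    forall a : A, D a = (\sum_i c i *: e i) * a - a * (\sum_i c i *: e i).

Definition der_bracket (D1 D2 : A -> A) : A -> A :=
  fun a => D1 (D2 a) - D2 (D1 a).

(* D is the derivation  f~  attached to F (via the tree walks gamma) *)
Definition tilde_der (gamma : 'I_n -> walk n Q1) (F : walk n Q1 -> k)
  (D : A -> A) : Prop :=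
  forall u : qpath n Q1, pvalid src tgt u ->
    D (nupath u) =
      F (wcat (wcat (gamma u.1) (path_walk u)) (winv src tgt (gamma (pend src tgt u))))
        *: nupath u.

End Algebra.

(* For a path u from x to y write w(u) for the closed walk gamma_y^-1 u gamma_x at x0. For a
   homomorphism f : pi_1(Q, I) -> k^+, the weight f(w(u)) is additive under concatenation of paths
   (the tree walks cancel in the middle) and constant on the paths of a minimal relation, which are
   homotopic by definition. A relation that is not minimal splits into two strictly shorter
   relations, so the weighted sum of every element of Ker nu vanishes and nu(u) |-> f(w(u)) nu(u)
   extends to a well-defined linear map on A; additivity of the weight makes it a derivation.
   Derivations of this kind act diagonally on the spanning set of paths, so they commute and depend
   linearly on f: the differences that should lie in Int_0(A) are all zero. *)

From Pilot Require Import Defs.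
From HB Require Import structures.
From mathcomp Require Import all_boot all_order all_algebra all_field.
From Stdlib Require Import Relation_Operators Classical.
From mathcomp Require Import zify.
Import GRing.Theory.
Local Open Scope ring_scope.
Set Implicit Arguments. Unset Strict Implicit. Unset Printing Implicit Defensive.

Lemma size_mask_negb (T : Type) (m : bitseq) (s : seq T) : size m = size s ->
  (size (mask m s) + size (mask (map negb m) s) = size s)%N.
Proof.
by move=> size_m; rewrite !size_mask ?size_map // count_map -size_m -(count_predC id).
Qed.

Section Walks.
Variables (n : nat) (Q1 : finType) (src tgt : Q1 -> 'I_n).

Local Notation steps_valid := (steps_valid src tgt).
Local Notation st_src := (st_src src tgt).
Local Notation st_tgt := (st_tgt src tgt).

Definition inv_steps (l : seq (step Q1)) : seq (step Q1) := rev (map (@step_inv Q1) l).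

Lemma inv_stepsK : involutive inv_steps.
Proof.
move=> l; rewrite /inv_steps map_rev revK -map_comp.
by elim: l => //= -[a []] l ->.
Qed.

Lemma st_src_inv s : st_src (step_inv s) = st_tgt s.
Proof. by case: s => a []. Qed.

Lemma st_tgt_inv s : st_tgt (step_inv s) = st_src s.
Proof. by case: s => a []. Qed.

Lemma steps_valid_cat x l1 l2 :
  steps_valid x (l1 ++ l2) = steps_valid x l1 && steps_valid (last x (map st_tgt l1)) l2.
Proof. by elim: l1 x => [|s l1 IH] x //=; rewrite IH andbA. Qed.

Lemma last_steps_cat x l1 l2 :
  last x (map st_tgt (l1 ++ l2)) = last (last x (map st_tgt l1)) (map st_tgt l2).
Proof. by rewrite map_cat last_cat. Qed.

Lemma steps_valid_inv x l : steps_valid x l ->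
  let y := last x (map st_tgt l) in
  steps_valid y (inv_steps l) /\ last y (map st_tgt (inv_steps l)) = x.
Proof.
elim: l x => [|s l IH] x //= /andP [/eqP <- /IH [valid_inv last_inv]].
rewrite /inv_steps rev_cons -cats1 steps_valid_cat last_steps_cat.
by rewrite valid_inv last_inv /= st_src_inv eqxx st_tgt_inv.
Qed.

Lemma steps_valid_cancel x p l q :
  steps_valid x (p ++ l ++ inv_steps l ++ q) -> steps_valid x (p ++ q).
Proof.
rewrite !steps_valid_cat => /and4P [-> valid_l _].
by have [_ ->] := steps_valid_inv valid_l.
Qed.

Lemma closed_at_cat x0 w1 w2 : closed_at src tgt x0 w1 -> closed_at src tgt x0 w2 ->
  closed_at src tgt x0 (wcat w1 w2).
Proof.
case: w1 w2 => x1 l1 [x2 l2]; rewrite /closed_at /wvalid /wend /wcat /=.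
case/and3P => valid1 /eqP x1E /eqP end1 /and3P [valid2 /eqP x2E /eqP end2]; subst x1 x2.
by rewrite steps_valid_cat valid1 end1 valid2 last_steps_cat end1 end2 eqxx.
Qed.

Lemma closed_at_nil x0 : closed_at src tgt x0 (x0, [::]).
Proof. by rewrite /closed_at /wvalid /wend /= eqxx. Qed.

Variables (k : fieldType) (A : falgType k) (e : 'I_n -> A) (nu : Q1 -> A).

Local Notation homotopic := (homotopic src tgt e nu).

Lemma pi1_hom_nil x0 (F : walk n Q1 -> k) : pi1_hom src tgt e nu x0 F -> F (x0, [::]) = 0.
Proof.
case=> _ /(_ _ _ (closed_at_nil x0) (closed_at_nil x0)) F_nil_nil.
by apply: (@addrI _ (F (x0, [::]))); rewrite addr0 -F_nil_nil.
Qed.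

Lemma homotopic_cancel_step x p s q :
  steps_valid x (p ++ [:: s, step_inv s & q]) ->
  homotopic (x, p ++ [:: s, step_inv s & q]) (x, p ++ q).
Proof.
move=> valid_long; have := valid_long.
rewrite !steps_valid_cat /= st_tgt_inv => /and3P [valid_p /eqP src_s /andP [_ valid_q]].
have valid_short : steps_valid x (p ++ q) by rewrite steps_valid_cat valid_p -src_s.
apply: rst_step; case: s src_s valid_long {valid_q} => a [] /= src_s valid_long.
- by apply: (hs_ctx (x := x) (p := p) (q := q) (hg_inv_l src tgt e nu a)).
- by apply: (hs_ctx (x := x) (p := p) (q := q) (hg_inv_r src tgt e nu a)).
Qed.

Lemma homotopic_cancel x p l q :
  steps_valid x (p ++ l ++ inv_steps l ++ q) ->
  homotopic (x, p ++ l ++ inv_steps l ++ q) (x, p ++ q).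
Proof.
elim: l p q => [|s l IH] p q /=; first by move=> _; apply: rst_refl.
have -> : p ++ s :: l ++ inv_steps (s :: l) ++ q =
          (p ++ [:: s]) ++ l ++ inv_steps l ++ step_inv s :: q.
  by rewrite /inv_steps /= rev_cons -cats1 -!catA.
move=> valid_long; apply: rst_trans (IH _ _ valid_long) _.
rewrite -catA /=; apply: homotopic_cancel_step.
by have := steps_valid_cancel valid_long; rewrite -catA.
Qed.

End Walks.

Section Combos.
Variables (n : nat) (Q1 : finType) (src tgt : Q1 -> 'I_n).
Variables (k : fieldType) (V : lmodType k).

Local Notation combo := (combo n Q1 k).

Definition combo_eval (h : qpath n Q1 -> V) (l : combo) : V := \sum_(c <- l) c.2 *: h c.1.

Definition paths_valid (l : combo) : bool := all (fun c => pvalid src tgt c.1) l.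

Definition combo_coef (l : combo) (p : qpath n Q1) : k := \sum_(c <- l | c.1 == p) c.2.

Lemma combo_ok_paths_valid (l : combo) : combo_ok src tgt l -> paths_valid l.
Proof. by case/andP. Qed.

Lemma combo_ok_mask m (l : combo) : combo_ok src tgt l -> combo_ok src tgt (mask m l).
Proof.
case/andP => uniq_l valid_l; rewrite /combo_ok map_mask mask_uniq //=.
by apply/allP => c /mem_mask; apply: (allP valid_l).
Qed.

Lemma combo_eval_mask h m l : size m = size l ->
  combo_eval h l = combo_eval h (mask m l) + combo_eval h (mask (map negb m) l).
Proof.
rewrite /combo_eval; elim: l m => [|c l IH] [|b m] //= => [_|[size_m]].
  by rewrite !big_nil addr0.
by case: b; rewrite !big_cons (IH m size_m) ?addrA // (addrC (c.2 *: h c.1)).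
Qed.

Lemma combo_eval_nonzero h l : combo_eval h (filter (fun c => c.2 != 0) l) = combo_eval h l.
Proof.
rewrite /combo_eval big_filter big_mkcond; apply: eq_bigr => c _.
by case: eqP => [->|]; rewrite ?scale0r.
Qed.

Lemma combo_eval_coef h l (s : seq (qpath n Q1)) : uniq s -> {subset map fst l <= s} ->
  \sum_(p <- s) combo_coef l p *: h p = combo_eval h l.
Proof.
move=> uniq_s l_s; rewrite /combo_eval /combo_coef.
under eq_bigr => p _ do rewrite scaler_suml big_mkcond.
rewrite exchange_big big_seq [RHS]big_seq; apply: eq_bigr => c c_l.
rewrite -big_mkcond -big_filter (@eq_filter _ _ (pred1 c.1)) => [|p]; last by rewrite eq_sym.
by rewrite filter_pred1_uniq ?big_seq1 // l_s // map_f.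
Qed.

Lemma combo_eval_scale_cat h c l1 l2 :
  combo_eval h (map (fun d => (d.1, c * d.2)) l1 ++ l2) = c *: combo_eval h l1 + combo_eval h l2.
Proof.
rewrite /combo_eval big_cat big_map scaler_sumr; congr (_ + _).
by apply: eq_bigr => d _; rewrite scalerA.
Qed.

Definition combo_weigh (f : qpath n Q1 -> k) (l : combo) : combo :=
  [seq (c.1, c.2 * f c.1) | c <- l].

Lemma paths_valid_weigh f l : paths_valid (combo_weigh f l) = paths_valid l.
Proof. by rewrite /paths_valid all_map. Qed.

Lemma combo_weighC f g l : combo_weigh f (combo_weigh g l) = combo_weigh g (combo_weigh f l).
Proof. by rewrite /combo_weigh -!map_comp; apply: eq_map => c /=; rewrite mulrAC. Qed.

Lemma combo_eval_weigh h f l :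
  combo_eval h (combo_weigh f l) = \sum_(c <- l) (c.2 * f c.1) *: h c.1.
Proof. by rewrite /combo_eval big_map. Qed.

Lemma combo_eval_weighD h f g l :
  combo_eval h (combo_weigh (fun u => f u + g u) l) =
  combo_eval h (combo_weigh f l) + combo_eval h (combo_weigh g l).
Proof.
by rewrite !combo_eval_weigh -big_split; apply: eq_bigr => c _; rewrite mulrDr scalerDl.
Qed.

Lemma combo_eval_weighZ h a f l :
  combo_eval h (combo_weigh (fun u => a * f u) l) = a *: combo_eval h (combo_weigh f l).
Proof.
by rewrite !combo_eval_weigh scaler_sumr; apply: eq_bigr => c _; rewrite scalerA mulrCA.
Qed.

Lemma linear_combo_eval (D : V -> V) h l : linear D ->
  D (combo_eval h l) = combo_eval (D \o h) l.
Proof.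
move=> D_lin; have D0 : D 0 = 0 by rewrite -[0 in LHS](subrr 0) (zmod_morphism_linear D_lin) subrr.
by elim: l => [|c l IH]; rewrite /combo_eval ?big_nil // !big_cons D_lin IH.
Qed.

End Combos.

Section PathAlgebra.
Variables (n : nat) (Q1 : finType) (src tgt : Q1 -> 'I_n).
Variables (k : fieldType) (A : falgType k) (e : 'I_n -> A) (nu : Q1 -> A).
Hypothesis e_idem : forall i, e i * e i = e i.
Hypothesis e_orth : forall i j, i != j -> e i * e j = 0.
Hypothesis nu_arrow : forall a, nu a = e (tgt a) * nu a * e (src a).

Local Notation nupath := (nupath e nu).
Local Notation pvalid := (pvalid src tgt).
Local Notation pend := (pend src tgt).

Lemma combo_valE l : combo_val e nu l = combo_eval nupath l.
Proof. by []. Qed.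

Definition pcat (v u : qpath n Q1) : qpath n Q1 := (v.1, v.2 ++ u.2).

Definition nu_word (l : seq Q1) : A := foldl (fun acc a => nu a * acc) 1 l.

Lemma foldl_nu_mul c l : foldl (fun acc a => nu a * acc) c l = nu_word l * c.
Proof.
rewrite /nu_word; elim: l c => [|a l IH] c /=; first by rewrite mul1r.
by rewrite IH [in RHS]IH mulr1 mulrA.
Qed.

Lemma nupathE u : nupath u = nu_word u.2 * e u.1.
Proof. exact: foldl_nu_mul. Qed.

Lemma mul_e i j : e i * e j = if i == j then e i else 0.
Proof. by case: eqVneq => [->|/e_orth]. Qed.

Lemma pendE u : pend u = last u.1 (map tgt u.2).
Proof. by case: u => x l; rewrite /Defs.pend /wend /= -map_comp. Qed.

Lemma nupath_mule u x : nupath u * e x = if u.1 == x then nupath u else 0.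
Proof. by rewrite nupathE -mulrA mul_e; case: eqP; rewrite ?mulr0. Qed.

Lemma mule_nupath u y : e y * nupath u = if pend u == y then nupath u else 0.
Proof.
case: u => x l; rewrite pendE /=; case/lastP: l => [|l a].
  by rewrite /nupath /= mul_e eq_sym; case: eqP => [->|].
rewrite /nupath foldl_rcons map_rcons last_rcons /= mulrA {1}nu_arrow !mulrA mul_e eq_sym.
by case: eqP => [<-|_]; rewrite ?mul0r // -nu_arrow.
Qed.

Lemma nupath_mul u v :
  nupath u * nupath v = if pend v == u.1 then nupath (pcat v u) else 0.
Proof.
rewrite (nupathE u) -mulrA mule_nupath; case: eqP => _; last by rewrite mulr0.
by rewrite /nupath foldl_cat (foldl_nu_mul _ u.2).
Qed.

Lemma pcat_valid v u : pvalid v -> pvalid u -> pend v = u.1 ->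
  pvalid (pcat v u) /\ pend (pcat v u) = pend u.
Proof.
rewrite /Defs.pvalid /Defs.pend /wvalid /wend /= map_cat steps_valid_cat => -> valid_u end_v.
by rewrite end_v valid_u last_steps_cat end_v.
Qed.

Lemma minimal_relation_ends (l : combo n Q1 k) c d :
  minimal_relation src tgt e nu l -> c \in l -> d \in l ->
  d.1.1 = c.1.1 /\ pend d.1 = pend c.1.
Proof.
case=> _ _ _ l_rel l_min c_l d_l.
pose same_ends (f : qpath n Q1 * k) := (f.1.1 == c.1.1) && (pend f.1 == pend c.1).
suff /allP /(_ _ d_l) /andP [/eqP -> /eqP ->] : all same_ends l by [].
apply: contraT => not_all.
have sub_rel : combo_val e nu (filter same_ends l) = e (pend c.1) * combo_val e nu l * e c.1.1.
  rewrite /combo_val big_filter mulr_sumr mulr_suml big_mkcond; apply: eq_bigr => f _.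
  rewrite -scalerAr -scalerAl mule_nupath /same_ends andbC.
  case: (pend f.1 == pend c.1); last by rewrite mul0r scaler0.
  by rewrite nupath_mule /=; case: ifP; rewrite ?scaler0.
have := l_min (map same_ends l); rewrite size_map -filter_mask sub_rel l_rel mulr0 mul0r eqxx.
apply=> //.
- have c_same : c \in filter same_ends l by rewrite mem_filter /same_ends !eqxx.
  by apply: contraTneq c_same => ->.
- by rewrite size_filter ltn_neqAle count_size andbT -all_count.
Qed.

Definition combo_mul (la lb : combo n Q1 k) : combo n Q1 k :=
  flatten [seq [seq (pcat d.1 c.1, c.2 * d.2) | d <- lb & pend d.1 == c.1.1] | c <- la].

Lemma combo_eval_mul (h : qpath n Q1 -> A) la lb : combo_eval h (combo_mul la lb) =
  \sum_(c <- la) \sum_(d <- lb | pend d.1 == c.1.1) (c.2 * d.2) *: h (pcat d.1 c.1).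
Proof.
rewrite /combo_eval /combo_mul big_flatten big_map; apply: eq_bigr => c _.
by rewrite big_map big_filter.
Qed.

Lemma combo_eval_mulr (h1 h2 : qpath n Q1 -> A) (la lb : combo n Q1 k) :
  combo_eval h1 la * combo_eval h2 lb =
  \sum_(c <- la) \sum_(d <- lb) (c.2 * d.2) *: (h1 c.1 * h2 d.1).
Proof.
rewrite /combo_eval mulr_suml; apply: eq_bigr => c _; rewrite mulr_sumr.
by apply: eq_bigr => d _; rewrite -scalerAl -scalerAr scalerA.
Qed.

Lemma paths_valid_mul la lb : paths_valid src tgt la -> paths_valid src tgt lb ->
  paths_valid src tgt (combo_mul la lb).
Proof.
move=> valid_a valid_b; apply/allP => x /flatten_mapP [c c_a] /mapP [d].
rewrite mem_filter => /andP [/eqP end_d d_b] ->.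
by have [] := pcat_valid (allP valid_b _ d_b) (allP valid_a _ c_a) end_d.
Qed.

Lemma combo_val_mul la lb :
  combo_val e nu (combo_mul la lb) = combo_val e nu la * combo_val e nu lb.
Proof.
rewrite !combo_valE combo_eval_mul combo_eval_mulr; apply: eq_bigr => c _.
rewrite big_mkcond; apply: eq_bigr => d _.
by rewrite nupath_mul; case: ifP; rewrite ?scaler0.
Qed.

Lemma not_minimal_relation_split (l : combo n Q1 k) :
  combo_ok src tgt l -> l != [::] -> all (fun c => c.2 != 0) l -> combo_val e nu l = 0 ->
  ~ minimal_relation src tgt e nu l ->
  exists m : bitseq, [/\ size m = size l, mask m l != [::],
                        (size (mask m l) < size l)%N & combo_val e nu (mask m l) = 0].
Proof.
move=> l_ok l_nil l_nz l_rel not_min; apply: NNPP => no_split; apply: not_min.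
split=> // m size_m m_nil m_lt; apply/eqP => m_rel.
by apply: no_split; exists m.
Qed.

Section TreeLoops.
Variables (x0 : 'I_n) (gamma : 'I_n -> walk n Q1).
Hypothesis gamma_valid : forall x, wvalid src tgt (gamma x).
Hypothesis gamma_start : forall x, (gamma x).1 = x0.
Hypothesis gamma_end : forall x, wend src tgt (gamma x) = x.

Local Notation steps_valid := (steps_valid src tgt).
Local Notation st_tgt := (st_tgt src tgt).
Local Notation homotopic := (homotopic src tgt e nu).
Local Notation arrow_steps u := (map (fun a : Q1 => (a, true)) u.2).

Definition tree_loop (u : qpath n Q1) : walk n Q1 :=
  wcat (wcat (gamma u.1) (path_walk u)) (winv src tgt (gamma (pend u))).

Lemma tree_loopE u :
  tree_loop u = (x0, (gamma u.1).2 ++ arrow_steps u ++ inv_steps (gamma (pend u)).2).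
Proof. by rewrite /tree_loop /wcat /winv /= gamma_start catA. Qed.

Lemma gamma_steps_valid x : steps_valid x0 (gamma x).2.
Proof. by have := gamma_valid x; rewrite /wvalid gamma_start. Qed.

Lemma gamma_steps_end x : last x0 (map st_tgt (gamma x).2) = x.
Proof. by have := gamma_end x; rewrite /wend gamma_start. Qed.

Lemma gamma_inv_steps x :
  steps_valid x (inv_steps (gamma x).2) /\ last x (map st_tgt (inv_steps (gamma x).2)) = x0.
Proof. by have := steps_valid_inv (gamma_steps_valid x); rewrite gamma_steps_end. Qed.

Lemma tree_loop_closed u : pvalid u -> closed_at src tgt x0 (tree_loop u).
Proof.
move=> valid_u; have valid_steps : steps_valid u.1 (arrow_steps u) := valid_u.
have [valid_inv end_inv] := gamma_inv_steps (pend u).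
rewrite /closed_at tree_loopE /wvalid /wend /= eqxx !steps_valid_cat !last_steps_cat.
by rewrite gamma_steps_valid gamma_steps_end valid_steps valid_inv end_inv eqxx.
Qed.

Lemma tree_loop_nil_homotopic x : homotopic (tree_loop (x, [::])) (x0, [::]).
Proof.
have := @homotopic_cancel _ _ src tgt _ _ e nu x0 [::] (gamma x).2 [::].
rewrite tree_loopE /= !cats0; apply.
have [valid_inv _] := gamma_inv_steps x.
by rewrite steps_valid_cat gamma_steps_valid gamma_steps_end.
Qed.

Lemma tree_loop_pcat_homotopic v u : pvalid v -> pvalid u -> pend v = u.1 ->
  homotopic (wcat (tree_loop v) (tree_loop u)) (tree_loop (pcat v u)).
Proof.
move=> valid_v valid_u end_v; have [_ end_vu] := pcat_valid valid_v valid_u end_v.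
have := closed_at_cat (tree_loop_closed valid_v) (tree_loop_closed valid_u).
rewrite /closed_at /wvalid /wcat !tree_loopE /= end_vu end_v map_cat => /andP [valid_cat _].
set g := (gamma u.1).2 in valid_cat *.
have cancel_g r : ((gamma v.1).2 ++ arrow_steps v ++ inv_steps g) ++ g ++ r =
    ((gamma v.1).2 ++ arrow_steps v) ++ inv_steps g ++ inv_steps (inv_steps g) ++ r.
  by rewrite inv_stepsK -!catA.
rewrite cancel_g in valid_cat *; rewrite -(catA (arrow_steps v)) (catA (gamma v.1).2).
exact: homotopic_cancel.
Qed.

Lemma tree_loop_minimal_relation_homotopic (l : combo n Q1 k) c d :
  minimal_relation src tgt e nu l -> c \in l -> d \in l ->
  homotopic (tree_loop c.1) (tree_loop d.1).
Proof.
move=> l_min c_l d_l; have [start_d end_d] := minimal_relation_ends l_min c_l d_l.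
have [l_ok _ _ _ _] := l_min.
have valid_path (f : qpath n Q1 * k) : f \in l -> pvalid f.1 by move/(allP (proj2 (andP l_ok))).
have := tree_loop_closed (valid_path _ d_l); have := tree_loop_closed (valid_path _ c_l).
rewrite !tree_loopE start_d end_d /closed_at /wvalid /= => /andP [valid_c _] /andP [valid_d _].
apply: rst_step.
have := hs_ctx (x := x0) (p := (gamma c.1.1).2) (q := inv_steps (gamma (pend c.1)).2)
  (hg_rel l_min (map_f fst c_l) (map_f fst d_l)).
by apply; rewrite //= /wend /= gamma_steps_end.
Qed.

Section Weight.
Variable F : walk n Q1 -> k.
Hypothesis F_hom : pi1_hom src tgt e nu x0 F.

Definition tilde_path (u : qpath n Q1) : A := F (tree_loop u) *: nupath u.

Lemma weight_nil x : F (tree_loop (x, [::])) = 0.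
Proof.
rewrite -(pi1_hom_nil F_hom); apply: F_hom.1 (tree_loop_nil_homotopic x) => //.
  exact: tree_loop_closed.
exact: closed_at_nil.
Qed.

Lemma weight_pcat v u : pvalid v -> pvalid u -> pend v = u.1 ->
  F (tree_loop (pcat v u)) = F (tree_loop v) + F (tree_loop u).
Proof.
move=> valid_v valid_u end_v; have [valid_vu _] := pcat_valid valid_v valid_u end_v.
rewrite -F_hom.2; try exact: tree_loop_closed.
apply: F_hom.1; last exact/rst_sym/tree_loop_pcat_homotopic.
  exact: tree_loop_closed.
exact: closed_at_cat (tree_loop_closed valid_v) (tree_loop_closed valid_u).
Qed.

Lemma tilde_eval_minimal_relation (l : combo n Q1 k) :
  minimal_relation src tgt e nu l -> combo_eval tilde_path l = 0.
Proof.
move=> l_min; have [/andP [_ /allP l_valid] l_nil _ l_rel _] := l_min.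
have [c0 c0_l] : exists c0, c0 \in l.
  by case: l l_nil {l_min l_valid l_rel} => // c0 l _; exists c0; apply: mem_head.
have same_weight c : c \in l -> F (tree_loop c.1) = F (tree_loop c0.1).
  move=> c_l; apply: F_hom.1; rewrite ?tree_loop_closed ?l_valid //.
  exact: tree_loop_minimal_relation_homotopic l_min c_l c0_l.
rewrite /combo_eval big_seq (eq_bigr (fun c => F (tree_loop c0.1) *: (c.2 *: nupath c.1))).
  by rewrite -big_seq -scaler_sumr [X in _ *: X]l_rel scaler0.
by move=> c c_l; rewrite /tilde_path same_weight // !scalerA mulrC.
Qed.

Lemma tilde_eval_relation (l : combo n Q1 k) :
  combo_ok src tgt l -> combo_val e nu l = 0 -> combo_eval tilde_path l = 0.
Proof.
move: {2}(size l) (leqnn (size l)) => N; elim: N l => [|N IH] l.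
  by rewrite leqn0 => /nilP -> _ _; rewrite /combo_eval big_nil.
move=> l_size l_ok l_rel.
have [l_nz|] := boolP (all (fun c => c.2 != 0) l); last first.
  rewrite all_count => count_ne.
  have count_lt : (count (fun c => c.2 != 0%R) l < size l)%N.
    by rewrite ltn_neqAle count_ne count_size.
  rewrite -combo_eval_nonzero; apply: IH.
  - by rewrite size_filter -ltnS (leq_trans count_lt).
  - by rewrite filter_mask combo_ok_mask.
  - by rewrite combo_valE combo_eval_nonzero.
have [->|l_nil] := eqVneq l [::]; first by rewrite /combo_eval big_nil.
have [l_min|not_min] := classic (minimal_relation src tgt e nu l).
  exact: tilde_eval_minimal_relation.
have [m [size_m m_nil m_lt m_rel]] := not_minimal_relation_split l_ok l_nil l_nz l_rel not_min.
have mc_rel : combo_val e nu (mask (map negb m) l) = 0.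
  by move: l_rel; rewrite !combo_valE (combo_eval_mask _ size_m) -combo_valE m_rel add0r.
have size_split := size_mask_negb size_m.
have m_pos : (0 < size (mask m l))%N by rewrite lt0n size_eq0.
by rewrite (combo_eval_mask _ size_m) !IH ?addr0 ?combo_ok_mask //; lia.
Qed.

Lemma tilde_eval_wd (l1 l2 : combo n Q1 k) :
  paths_valid src tgt l1 -> paths_valid src tgt l2 -> combo_val e nu l1 = combo_val e nu l2 ->
  combo_eval tilde_path l1 = combo_eval tilde_path l2.
Proof.
move=> valid1 valid2 same_val.
(* [combo_ok] asks for distinct paths, so [l1 - l2] is formed coefficientwise. *)
pose s := undup (map fst (l1 ++ l2)).
pose ldiff := [seq (p, combo_coef l1 p - combo_coef l2 p) | p <- s].
have ldiffE h : combo_eval h ldiff = combo_eval h l1 - combo_eval h l2.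
  rewrite /combo_eval big_map /=; under eq_bigr => p _ do rewrite scalerBl.
  by rewrite sumrB !combo_eval_coef ?undup_uniq // => p p_l;
    rewrite mem_undup map_cat mem_cat p_l ?orbT.
have ldiff_ok : combo_ok src tgt ldiff.
  rewrite /combo_ok -map_comp map_id undup_uniq /=; apply/allP => _ /mapP [p + ->] /=.
  rewrite mem_undup map_cat mem_cat => /orP [] /mapP [c c_l ->].
  - exact: (allP valid1).
  - exact: (allP valid2).
apply/eqP; rewrite -subr_eq0 -ldiffE tilde_eval_relation //.
by rewrite combo_valE ldiffE -!combo_valE same_val subrr.
Qed.

Section Derivation.
Hypothesis nu_onto :
  forall a : A, exists l : combo n Q1 k, combo_ok src tgt l /\ a = combo_val e nu l.

Lemma nu_onto_combo a : exists l : combo n Q1 k, combo_ok src tgt l && (a == combo_val e nu l).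
Proof. by have [l [l_ok ->]] := nu_onto a; exists l; rewrite l_ok eqxx. Qed.

Definition tilde_map (a : A) : A := combo_eval tilde_path (xchoose (nu_onto_combo a)).

Lemma tilde_mapE l :
  paths_valid src tgt l -> tilde_map (combo_val e nu l) = combo_eval tilde_path l.
Proof.
move=> valid_l.
have /andP [chosen_ok /eqP chosen_val] := xchooseP (nu_onto_combo (combo_val e nu l)).
by apply: tilde_eval_wd => //; apply: combo_ok_paths_valid.
Qed.

Lemma nu_onto_valid a : exists2 l : combo n Q1 k, paths_valid src tgt l & a = combo_val e nu l.
Proof. by have [l [/combo_ok_paths_valid l_valid ->]] := nu_onto a; exists l. Qed.

Lemma tilde_map_linear : linear tilde_map.
Proof.
move=> c a b; have [la valid_a ->] := nu_onto_valid a; have [lb valid_b ->] := nu_onto_valid b.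
rewrite !combo_valE -combo_eval_scale_cat -!combo_valE !tilde_mapE ?combo_eval_scale_cat //.
by rewrite [paths_valid _ _ _]all_cat all_map; apply/andP.
Qed.

Lemma tilde_map_mul a b : tilde_map (a * b) = tilde_map a * b + a * tilde_map b.
Proof.
have [la valid_a ->] := nu_onto_valid a; have [lb valid_b ->] := nu_onto_valid b.
rewrite -combo_val_mul !tilde_mapE ?paths_valid_mul // !combo_valE.
rewrite combo_eval_mul !combo_eval_mulr -big_split; apply: eq_big_seq => c c_a.
rewrite -big_split big_mkcond; apply: eq_big_seq => d d_b /=.
rewrite /tilde_path -scalerDr -scalerAl -scalerAr -scalerDl nupath_mul.
case: eqP => [end_d|_]; last by rewrite !scaler0.
by rewrite weight_pcat ?(allP valid_a _ c_a) ?(allP valid_b _ d_b) // addrC.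
Qed.

Lemma tilde_map_path u : pvalid u -> tilde_map (nupath u) = F (tree_loop u) *: nupath u.
Proof.
move=> valid_u; have := tilde_mapE (l := [:: (u, 1)]).
by rewrite /paths_valid /= valid_u /combo_val /combo_eval !big_seq1 !scale1r => ->.
Qed.

Lemma tilde_map_e i : tilde_map (e i) = 0.
Proof.
have -> : e i = nupath (i, [::]) by [].
by rewrite tilde_map_path // weight_nil scale0r.
Qed.

Lemma tilde_der_exists : exists D, der0 e D /\ tilde_der src tgt e nu gamma F D.
Proof.
exists tilde_map; split; last exact: tilde_map_path.
by split; [exact: tilde_map_linear | exact: tilde_map_mul | exact: tilde_map_e].
Qed.

End Derivation.
End Weight.
End TreeLoops.
End PathAlgebra.

Section DiagonalDerivations.
Variables (n : nat) (Q1 : finType) (src tgt : Q1 -> 'I_n).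
Variables (k : fieldType) (A : falgType k) (e : 'I_n -> A) (nu : Q1 -> A).
Hypothesis nu_onto :
  forall a : A, exists l : combo n Q1 k, combo_ok src tgt l /\ a = combo_val e nu l.

Definition acts_diagonally (D : A -> A) (f : qpath n Q1 -> k) : Prop :=
  forall u, pvalid src tgt u -> D (nupath e nu u) = f u *: nupath e nu u.

Lemma diagonal_combo_val D f l : linear D -> acts_diagonally D f -> paths_valid src tgt l ->
  D (combo_val e nu l) = combo_val e nu (combo_weigh f l).
Proof.
move=> D_lin D_diag /allP l_valid; rewrite !combo_valE linear_combo_eval // combo_eval_weigh.
rewrite /combo_eval big_seq [RHS]big_seq; apply: eq_bigr => c c_l /=.
by rewrite D_diag ?l_valid // scalerA.
Qed.

Lemma diagonal_add D1 D2 D f1 f2 : linear D1 -> linear D2 -> linear D ->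
  acts_diagonally D1 f1 -> acts_diagonally D2 f2 -> acts_diagonally D (fun u => f1 u + f2 u) ->
  forall a, D a - D1 a - D2 a = 0.
Proof.
move=> D1_lin D2_lin D_lin D1_diag D2_diag D_diag a.
have [l [/combo_ok_paths_valid l_valid ->]] := nu_onto a.
rewrite !(diagonal_combo_val D_lin D_diag, diagonal_combo_val D1_lin D1_diag,
  diagonal_combo_val D2_lin D2_diag) //.
by rewrite !combo_valE combo_eval_weighD addrAC addrK subrr.
Qed.

Lemma diagonal_scale D1 D a f : linear D1 -> linear D ->
  acts_diagonally D1 f -> acts_diagonally D (fun u => a * f u) ->
  forall b, D b - a *: D1 b = 0.
Proof.
move=> D1_lin D_lin D1_diag D_diag b.
have [l [/combo_ok_paths_valid l_valid ->]] := nu_onto b.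
rewrite (diagonal_combo_val D_lin D_diag) ?(diagonal_combo_val D1_lin D1_diag) //.
by rewrite !combo_valE combo_eval_weighZ subrr.
Qed.

Lemma diagonal_commute D1 D2 f1 f2 : linear D1 -> linear D2 ->
  acts_diagonally D1 f1 -> acts_diagonally D2 f2 -> forall a, D1 (D2 a) - D2 (D1 a) = 0.
Proof.
move=> D1_lin D2_lin D1_diag D2_diag a.
have [l [/combo_ok_paths_valid l_valid ->]] := nu_onto a.
have eval1 := diagonal_combo_val D1_lin D1_diag; have eval2 := diagonal_combo_val D2_lin D2_diag.
rewrite eval2 // eval1 ?paths_valid_weigh // eval1 // eval2 ?paths_valid_weigh //.
by rewrite combo_weighC subrr.
Qed.

Lemma int0_zero (D : A -> A) : (forall a, D a = 0) -> int0 e D.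
Proof.
move=> D0; exists (fun _ => 0) => a.
by rewrite D0 big1 ?mul0r ?mulr0 ?subr0 // => i _; rewrite scale0r.
Qed.

End DiagonalDerivations.

Theorem mainTheorem4 (k : closedFieldType) (A : falgType k) (n : nat)
  (Q1 : finType) (src tgt : Q1 -> 'I_n) (e : 'I_n -> A) (nu : Q1 -> A)
  (x0 : 'I_n) (T : {set Q1}) (gamma : 'I_n -> walk n Q1) :
  complete_primitive_orthogonal e ->
  basic_wrt e ->
  connected_algebra A ->
  no_oriented_cycles src tgt ->
  admissible_presentation src tgt e nu ->
  maximal_tree src tgt T ->
  (forall x, minimal_tree_walk src tgt T x0 x (gamma x)) ->
  (* theta_nu is well defined *)
  (forall F, pi1_hom src tgt e nu x0 F ->
     exists D, der0 e D /\ tilde_der src tgt e nu gamma F D) /\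
  (* theta_nu is additive *)
  (forall F G DF DG DFG,
     pi1_hom src tgt e nu x0 F -> pi1_hom src tgt e nu x0 G ->
     der0 e DF -> der0 e DG -> der0 e DFG ->
     tilde_der src tgt e nu gamma F DF -> tilde_der src tgt e nu gamma G DG ->
     tilde_der src tgt e nu gamma (fun w => F w + G w) DFG ->
     int0 e (fun a => DFG a - DF a - DG a)) /\
  (* theta_nu is k-homogeneous *)
  (forall (c : k) F DF DcF,
     pi1_hom src tgt e nu x0 F ->
     der0 e DF -> der0 e DcF ->
     tilde_der src tgt e nu gamma F DF ->
     tilde_der src tgt e nu gamma (fun w => c * F w) DcF ->
     int0 e (fun a => DcF a - c *: DF a)) /\
  (* theta_nu preserves brackets: [theta f, theta g] = theta [f, g] = 0 *)
  (forall F G DF DG,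
     pi1_hom src tgt e nu x0 F -> pi1_hom src tgt e nu x0 G ->
     der0 e DF -> der0 e DG ->
     tilde_der src tgt e nu gamma F DF -> tilde_der src tgt e nu gamma G DG ->
     int0 e (der_bracket DF DG)).
Proof.
(* Only the endpoints of the walks [gamma x] matter. *)
move=> [_ e_idem e_orth _] _ _ _ [nu_arrow nu_onto _] _ gamma_min.
have gamma_valid x : wvalid src tgt (gamma x) by case: (gamma_min x).
have gamma_start x : (gamma x).1 = x0 by case: (gamma_min x).
have gamma_end x : wend src tgt (gamma x) = x by case: (gamma_min x).
split; last split; last split.
- move=> F F_hom.
  exact: (tilde_der_exists e_idem e_orth nu_arrow gamma_valid gamma_start gamma_end F_hom nu_onto).
- move=> F G DF DG DFG _ _ [DF_lin _ _] [DG_lin _ _] [DFG_lin _ _] DF_diag DG_diag DFG_diag.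
  exact/int0_zero/(diagonal_add nu_onto DF_lin DG_lin DFG_lin DF_diag DG_diag DFG_diag).
- move=> c F DF DcF _ [DF_lin _ _] [DcF_lin _ _] DF_diag DcF_diag.
  exact/int0_zero/(diagonal_scale nu_onto DF_lin DcF_lin DF_diag DcF_diag).
- move=> F G DF DG _ _ [DF_lin _ _] [DG_lin _ _] DF_diag DG_diag.
  exact/int0_zero/(diagonal_commute nu_onto DF_lin DG_lin DF_diag DG_diag).
Qed.
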